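(* Let $\theta_{12},\gamma_{12},\theta_{23},\gamma_{23}\in(0,1)$ and for $(i,j)\in\{(1,2),(2,3)\}$ let $g_{\{i,j\}}(x_i,x_j)=\frac{x_i}{\theta_{ij}}+\frac{x_j}{\gamma_{ij}}+\Big(1-\frac{1}{\theta_{ij}}-\frac{1}{\gamma_{ij}}\Big)\min(x_i,x_j)$ for $x_i,x_j\ge0$. Let $g(x_1,x_2,x_3)=g_{\{1,2\}}(x_1,x_2)+g_{\{2,3\}}(x_2,x_3)-x_2$ and $g_{\{1,3\}}(x_1,x_3):=\min_{x_2\ge0}g(x_1,x_2,x_3)$. Then for all $x_1,x_3\ge0$, $$g_{\{1,3\}}(x_1,x_3)=\frac{x_1}{\max(\theta_{12},\theta_{23})}+\frac{x_3}{\max(\gamma_{12},\gamma_{23})}+\Big(1-\frac{1}{\max(\theta_{12},\theta_{23})}-\frac{1}{\max(\gamma_{12},\gamma_{23})}\Big)\min(x_1,x_3).$$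
   Context: This is the chain geometric extremal graphical model on vertices $\{1,2,3\}$ with edges $\{1,2\},\{2,3\}$ in standard exponential margins; $g_{\{1,3\}}$ is its bivariate marginal gauge. *)

From HB Require Import structures.
From mathcomp Require Import all_boot all_order all_algebra.
Set Implicit Arguments. Unset Strict Implicit. Unset Printing Implicit Defensive.
Import Order.TTheory GRing.Theory Num.Theory.
Local Open Scope ring_scope.

Definition gbiv (R : realFieldType) (th ga xi xj : R) : R :=
  xi / th + xj / ga + (1 - th^-1 - ga^-1) * Num.min xi xj.

Definition gchain (R : realFieldType) (th12 ga12 th23 ga23 x1 x2 x3 : R) : R :=
  gbiv th12 ga12 x1 x2 + gbiv th23 ga23 x2 x3 - x2.

Definition is_min_nonneg (R : realFieldType) (f : R -> R) (m : R) : Prop :=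
  (exists2 x2 : R, 0 <= x2 & f x2 = m) /\ (forall x2 : R, 0 <= x2 -> m <= f x2).

From mathcomp Require Import all_boot all_order all_algebra.
From mathcomp Require Import ring.
Import Order.TTheory GRing.Theory Num.Theory.
Local Open Scope ring_scope.

(* Writing p = 1/th and q = 1/ga, the gauge is
   gbiv th ga x y = y + p (x - y)^+ + (q - 1) (y - x)^+.
   For th > 0 and 0 < ga <= 1 both coefficients are nonnegative, so the gauge
   decreases in th and ga and, by subadditivity of the positive part, obeys
   gbiv x z <= gbiv x y + gbiv y z - y.  Comparing both links of the chain with
   the gauge at the maximal parameters gives the lower bound for every x2.
   Since gbiv x x = x, the chain equals g12(x1, x3) at x2 = x3 and g23(x1, x3)
   at x2 = x1; the gauge at the maximal parameters is the smaller of the two,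
   because it only involves th when x1 >= x3 and only ga when x1 <= x3. *)

Section BivariateGauge.
Context {R : realFieldType}.
Implicit Types a b th ga x y z : R.

Lemma invr_max a b : 0 < a -> 0 < b -> (Num.max a b)^-1 = Num.min a^-1 b^-1.
Proof.
move=> a_gt0 b_gt0; case: (leP a b) => [le_ab | /ltW le_ba].
  by rewrite min_r // lef_pV2 ?posrE.
by rewrite min_l // lef_pV2 ?posrE.
Qed.

Lemma max0_ge0 a : 0 <= Num.max a 0.
Proof. by rewrite le_max lexx orbT. Qed.

Lemma max0D_le a b : Num.max (a + b) 0 <= Num.max a 0 + Num.max b 0.
Proof.
rewrite ge_max addr_ge0 ?max0_ge0 // andbT.
by rewrite lerD // le_max lexx.
Qed.

Lemma gbivE th ga x y :
  gbiv th ga x y = y + th^-1 * Num.max (x - y) 0 + (ga^-1 - 1) * Num.max (y - x) 0.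
Proof.
rewrite /gbiv; case: (leP x y) => [le_xy | /ltW le_yx].
  rewrite (max_r (_ : x - y <= 0)) ?subr_le0 // max_l ?subr_ge0 //.
  ring.
rewrite (max_r (_ : y - x <= 0)) ?subr_le0 // max_l ?subr_ge0 //.
ring.
Qed.

Lemma gbiv_diag th ga x : gbiv th ga x x = x.
Proof. by rewrite /gbiv minxx; ring. Qed.

Lemma gbiv_le th ga th' ga' x y :
  0 < th <= th' -> 0 < ga <= ga' -> gbiv th' ga' x y <= gbiv th ga x y.
Proof.
move=> /andP[th_gt0 le_th] /andP[ga_gt0 le_ga].
have th'_gt0 : 0 < th' := lt_le_trans th_gt0 le_th.
have ga'_gt0 : 0 < ga' := lt_le_trans ga_gt0 le_ga.
rewrite !gbivE lerD ?ler_wpM2r ?max0_ge0 ?lerB //.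
- by rewrite lerD2l ler_wpM2r ?max0_ge0 // lef_pV2 ?posrE.
- by rewrite lef_pV2 ?posrE.
Qed.

Lemma gbiv_triangle th ga x y z : 0 < th -> 0 < ga <= 1 ->
  gbiv th ga x z <= gbiv th ga x y + gbiv th ga y z - y.
Proof.
move=> th_gt0 /andP[ga_gt0 ga_le1].
have q1_ge0 : 0 <= ga^-1 - 1 by rewrite subr_ge0 invf_ge1.
have -> : gbiv th ga x y + gbiv th ga y z - y =
  z + th^-1 * (Num.max (x - y) 0 + Num.max (y - z) 0)
    + (ga^-1 - 1) * (Num.max (z - y) 0 + Num.max (y - x) 0).
  by rewrite !gbivE; ring.
rewrite gbivE lerD ?lerD2l //; apply: ler_wpM2l => //.
- by rewrite invr_ge0 ltW.
- by rewrite (_ : x - z = (x - y) + (y - z)) ?max0D_le //; ring.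
- by rewrite (_ : z - x = (z - y) + (y - x)) ?max0D_le //; ring.
Qed.

Lemma gbiv_max th ga th' ga' x y :
  0 < th -> 0 < ga -> 0 < th' -> 0 < ga' ->
  gbiv (Num.max th th') (Num.max ga ga') x y =
  Num.min (gbiv th ga x y) (gbiv th' ga' x y).
Proof.
move=> th_gt0 ga_gt0 th'_gt0 ga'_gt0; rewrite !gbivE !invr_max //.
case: (leP x y) => [le_xy | /ltW le_yx].
  rewrite (max_r (_ : x - y <= 0)) ?subr_le0 // !mulr0 !addr0.
  by rewrite addr_minl minr_pMl ?max0_ge0 // addr_minr.
rewrite (max_r (_ : y - x <= 0)) ?subr_le0 // !mulr0 !addr0.
by rewrite minr_pMl ?max0_ge0 // addr_minr.
Qed.

End BivariateGauge.

Theorem lemma1 (R : realFieldType) (th12 ga12 th23 ga23 : R) :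
  0 < th12 < 1 -> 0 < ga12 < 1 -> 0 < th23 < 1 -> 0 < ga23 < 1 ->
  forall x1 x3 : R, 0 <= x1 -> 0 <= x3 ->
  is_min_nonneg (fun x2 => gchain th12 ga12 th23 ga23 x1 x2 x3)
    (gbiv (Num.max th12 th23) (Num.max ga12 ga23) x1 x3).
Proof.
move=> /andP[th12_gt0 _] /andP[ga12_gt0 ga12_lt1].
move=> /andP[th23_gt0 _] /andP[ga23_gt0 ga23_lt1] x1 x3 x1_ge0 x3_ge0.
rewrite /is_min_nonneg /gchain; split.
  rewrite gbiv_max //; case: leP => _.
    by exists x3; rewrite // gbiv_diag addrK.
  by exists x1; rewrite // gbiv_diag addrAC subrr add0r.
move=> x2 _; apply: le_trans (gbiv_triangle _ _ x1 x2 x3 _ _) _.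
- by rewrite lt_max th12_gt0.
- by rewrite lt_max ga12_gt0 ge_max !ltW.
by rewrite lerD2r lerD // gbiv_le // ?(th12_gt0, th23_gt0, ga12_gt0, ga23_gt0) le_max lexx ?orbT.
Qed.
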